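(* Let $T$ be a finite rooted tree with a vertex coloring, and suppose that all orbits of $\mathrm{Aut}(T)$ on the set of leaves of $T$ have the same size. Then there exists a vertex-colored graph $H_T$ containing $T$ (with its coloring) as an induced subgraph such that $V(T)$ is invariant under $\mathrm{Aut}(H_T)$, the action of $\mathrm{Aut}(H_T)$ on $V(T)$ is faithful, the action of $\mathrm{Aut}(H_T)$ on the set of leaves of $T$ is semiregular, and the orbits of $\mathrm{Aut}(H_T)$ on $V(T)$ are exactly the orbits of $\mathrm{Aut}(T)$ on $V(T)$.
   Context: For a vertex-colored graph or tree, automorphisms are required to preserve vertex colors (and, for the rooted tree $T$, the tree structure); $\mathrm{Aut}(\cdot)$ denotes the group of such automorphisms. A leaf orbit of $T$ is an orbit of $\mathrm{Aut}(T)$ on the set of leaves. The action of a group on a set is faithful if only the identity acts trivially, and semiregular if every point stabilizer is trivial (only the identity fixes any given point). *)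

From mathcomp Require Import all_boot all_fingroup.
Set Implicit Arguments. Unset Strict Implicit. Unset Printing Implicit Defensive.

Definition is_rooted_tree (T : finType) (r : T) (p : T -> T) : Prop :=
  p r = r /\ forall x : T, exists n : nat, iter n p x = r.

Definition tadj (T : finType) (p : T -> T) : rel T :=
  fun x y => (x != y) && ((p x == y) || (p y == x)).

Definition tleaf (T : finType) (r : T) (p : T -> T) (x : T) : bool :=
  [forall y, (y != r) ==> (p y != x)].

Definition is_autT (T : finType) (C : eqType) (r : T) (p : T -> T)
  (col : T -> C) (s : {perm T}) : bool :=
  [&& s r == r,
      [forall x, forall y, tadj p (s x) (s y) == tadj p x y] &
      [forall x, col (s x) == col x]].

Definition AutT (T : finType) (C : eqType) (r : T) (p : T -> T)
  (col : T -> C) : {set {perm T}} := [set s | is_autT r p col s].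

Definition orbitT (T : finType) (C : eqType) (r : T) (p : T -> T)
  (col : T -> C) (x : T) : {set T} := [set (s : {perm T}) x | s in AutT r p col].

Definition is_autG (W : finType) (D : eqType) (e : rel W) (col : W -> D)
  (s : {perm W}) : bool :=
  [forall x, forall y, e (s x) (s y) == e x y] && [forall x, col (s x) == col x].

From mathcomp Require Import all_boot all_fingroup cyclic.
Set Implicit Arguments. Unset Strict Implicit. Unset Printing Implicit Defensive.

(* Aut(T) contains an automorphism s whose cycles are exactly the Aut(T)-orbits.
   It is built level by level: among the automorphisms whose cycles are the
   orbits on the upper levels, take one with fewest cycles on the next level.
   If one of these cycles were smaller than its orbit, it would contain a
   vertex x having a sibling y in its orbit but not in its cycle, and composing
   with the automorphism that exchanges the subtrees of x and y would merge two
   cycles. In the cyclic group <s>, points with orbits of equal size have equal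
   stabilisers, so an element of <s> fixing one leaf fixes every leaf, hence
   every vertex. Finally H_T attaches to T one vertex for each g in <s> and, for
   each g and v, a vertex joined to g and to v and coloured by g^-1 v; the
   automorphisms of H_T are exactly the right translations by elements of <s>. *)

Section RootedTree.
Variables (T : finType) (r : T) (p : T -> T).
Hypothesis tree : is_rooted_tree r p.

Lemma tadj_sym : symmetric (tadj p).
Proof. by move=> x y; rewrite /tadj eq_sym orbC. Qed.

Lemma tadj_irr : irreflexive (tadj p).
Proof. by move=> x; rewrite /tadj eqxx. Qed.

Lemma parent_root : p r = r. Proof. by case: tree. Qed.

Lemma iter_parent_root n : iter n p r = r. Proof. exact: iter_fix parent_root. Qed.

Lemma iterS_parent_id x m : iter m.+1 p x = x -> x = r.
Proof.
case: tree => _ /(_ x) [n xn] xm.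
have iter_mul k : iter (k * m.+1) p x = x.
  by elim: k => // k IH; rewrite mulSn iterD IH xm.
by rewrite -(iter_mul n) mulnS addnC iterD xn iter_parent_root.
Qed.

Definition ancestor (a z : T) : bool := fconnect p z a.

Lemma ancestorP a z : reflect (exists n, iter n p z = a) (ancestor a z).
Proof.
apply: (iffP idP) => [/iter_findex za | [n <-]]; last exact: fconnect_iter.
by exists (findex p z a).
Qed.

Lemma ancestor_refl a : ancestor a a. Proof. exact: connect0. Qed.

Lemma ancestor_parent a z : ancestor a (p z) -> ancestor a z.
Proof. by move=> /ancestorP[n za]; apply/ancestorP; exists n.+1; rewrite iterSr. Qed.

Lemma ancestor_parent_neq a z : ancestor a z -> z != a -> ancestor a (p z).
Proof.
move=> /ancestorP[[|n] za] zna; first by rewrite -za eqxx in zna.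
by apply/ancestorP; exists n; rewrite -iterSr.
Qed.

(* [level d] is the set of vertices at distance [d.+1] from the root, whereas
   [iter d p w = r] says that w is at distance at most d. *)
Definition level (d : nat) : {set T} :=
  [set z | (iter d.+1 p z == r) && (iter d p z != r)].

Lemma level_iter d a b k : a \in level d -> b \in level d -> iter k p a = b -> k = 0.
Proof.
rewrite !inE => /andP[/eqP ar _] /andP[_ bnr]; case: k => // k ab.
by rewrite -ab -iterD addnS -addSn addnC iterD ar iter_parent_root eqxx in bnr.
Qed.

Lemma level_ancestor d a w : a \in level d -> w \in level d -> ancestor a w = (w == a).
Proof.
move=> aL wL; apply/idP/eqP => [|->]; last exact: ancestor_refl.
by move=> /ancestorP[n wa]; rewrite -wa (level_iter wL aL wa).
Qed.

Lemma level_ancestor_upper d a z : a \in level d -> iter d p z = r -> ~~ ancestor a z.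
Proof.
rewrite inE => /andP[_ anr] zr; apply/negP => /ancestorP[n za].
by rewrite -za -iterD addnC iterD zr iter_parent_root eqxx in anr.
Qed.

Lemma level_ancestor_uniq d a b z : a \in level d -> b \in level d ->
  ancestor a z -> ancestor b z -> a = b.
Proof.
move=> aL bL /ancestorP[n za] /ancestorP[m zb].
wlog nm : a b n m aL bL za zb / n <= m.
  by move=> wlog; case: (leqP n m) => [|/ltnW] nm; [|apply/esym]; apply: wlog nm.
have ab : iter (m - n) p a = b by rewrite -za -iterD subnK.
by rewrite -ab (level_iter aL bL ab).
Qed.

Lemma exists_leaf_below v : exists2 l, tleaf r p l & ancestor v l.
Proof.
pose below z := [set w | ancestor z w].
have [z vz zmin] := arg_minnP (fun z => #|below z|) (ancestor_refl v).
exists z => //; apply/forallP => c; apply/implyP => cr; apply/negP => /eqP pcz.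
have vc : ancestor v c by apply: ancestor_parent; rewrite pcz.
have := zmin c vc; apply/negP; rewrite -ltnNge; apply: proper_card.
rewrite properE; apply/andP; split.
  by apply/subsetP => w; rewrite !inE => /ancestorP[n wc]; apply/ancestorP;
     exists n.+1; rewrite iterS wc.
apply/subsetP => /(_ z); rewrite !inE ancestor_refl => /(_ isT) /ancestorP[n zc].
by rewrite (@iterS_parent_id c n) ?eqxx // in cr; rewrite iterSr pcz.
Qed.

End RootedTree.

Section PermCycles.
Variable T : finType.
Implicit Types s a : {perm T}.
Local Open Scope group_scope.

Lemma porbit_restr_perm (S : {set T}) s x : s \in 'N(S | 'P) -> x \in S ->
  porbit (restr_perm S s) x = porbit s x.
Proof.
move=> nSs xS; have sX i : (restr_perm S s ^+ i) x = (s ^+ i) x.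
  elim: i => // i IH; rewrite !expgSr !permM IH restr_permE //.
  by rewrite -[(s ^+ i) x]/(aperm x (s ^+ i)) astabs_act ?groupX.
by apply/setP => y; apply/porbitP/porbitP => -[i ->]; exists i; rewrite sX.
Qed.

(* A cyclic group has a single subgroup of each order, so two points with
   orbits of the same size have the same stabiliser. *)
Lemma cycle_fix_card_porbit s a x y : a \in <[s]> ->
  #|porbit s x| = #|porbit s y| -> a x = x -> a y = y.
Proof.
move=> as_ xy ax.
have card_stab z : (#|porbit s z| * #|'C_<[s]>[z | 'P]|)%N = #[s].
  by rewrite porbitE card_orbit_stab.
have stab_xy : 'C_<[s]>[x | 'P] = 'C_<[s]>[y | 'P].
  apply/eqP; rewrite (@eq_subG_cyclic _ <[s]>%G) ?cycle_cyclic ?subsetIl //.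
  have x_pos : 0 < #|porbit s x| by rewrite lt0n card_porbit_neq0.
  by rewrite -(eqn_pmul2l x_pos) {2}xy !card_stab.
have : a \in 'C_<[s]>[x | 'P] by rewrite inE as_; apply/astab1P.
by rewrite stab_xy => /setIP[_ /astab1P].
Qed.

End PermCycles.

Section TreeAutomorphisms.
Variables (T : finType) (C : eqType) (r : T) (p : T -> T) (col : T -> C).
Hypothesis tree : is_rooted_tree r p.
Local Notation AT := (AutT r p col).
Local Notation OT := (orbitT r p col).
Implicit Types s t : {perm T}.
Local Open Scope group_scope.

Lemma AutTP s : reflect
  [/\ s r = r, forall x y, tadj p (s x) (s y) = tadj p x y & forall x, col (s x) = col x]
  (s \in AT).
Proof.
rewrite inE; apply: (iffP and3P) => [[/eqP sr /forallP sadj /forallP scol] | [sr sadj scol]].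
  by split=> // [x y | x]; apply/eqP; [apply: (forallP (sadj x)) | apply: scol].
split; first exact/eqP.
  by apply/forallP => x; apply/forallP => y; rewrite sadj.
by apply/forallP => x; rewrite scol.
Qed.

Lemma AutT_is_autG s : s \in AT -> is_autG (tadj p) col s.
Proof.
case/AutTP => _ sadj scol; apply/andP; split; apply/forallP => x.
  by apply/forallP => y; rewrite sadj.
by rewrite scol.
Qed.

Lemma AutT_root s : s \in AT -> s r = r. Proof. by case/AutTP. Qed.

Lemma AutT_col s x : s \in AT -> col (s x) = col x. Proof. by case/AutTP. Qed.

Lemma AutT_group_set : group_set AT.
Proof.
apply/group_setP; split; first by apply/AutTP; split=> *; rewrite ?perm1.
move=> s t /AutTP[sr sadj scol] /AutTP[tr tadj' tcol].
by apply/AutTP; split=> *; rewrite !permM ?sr ?tr ?tadj' ?sadj ?tcol ?scol.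
Qed.

Canonical AutT_group := Group AutT_group_set.

Lemma mem_AutT_parent s : s r = r -> (forall x, s (p x) = p (s x)) ->
  (forall x, col (s x) = col x) -> s \in AT.
Proof.
move=> sr sp scol; apply/AutTP; split=> // x y.
by rewrite /tadj (inj_eq perm_inj) -!sp !(inj_eq perm_inj).
Qed.

Lemma AutT_parent s x : s \in AT -> s (p x) = p (s x).
Proof.
move=> /AutTP[sr sadj _]; case: tree => _ /(_ x) [n].
elim: n x => [|n IH] x; first by move=> /= ->; rewrite (parent_root tree) sr (parent_root tree).
have [-> _|xnr xn] := eqVneq x r; first by rewrite (parent_root tree) sr (parent_root tree).
have pxnx : p x != x by apply: contra_neq xnr => /(@iterS_parent_id _ _ _ tree x 0).
have : tadj p x (p x) by rewrite /tadj eq_sym pxnx eqxx.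
(* s (p x) is adjacent to s x; were it a child of s x, induction would give
   s (p (p x)) = s x, making x a periodic point of p. *)
rewrite -sadj /tadj => /andP[_ /orP[/eqP // | /eqP spsx]].
rewrite -IH -?iterSr // in spsx; move/perm_inj: spsx => ppxx.
by rewrite (@iterS_parent_id _ _ _ tree x 1) ?eqxx //= ppxx in xnr.
Qed.

Lemma AutT_iter s n x : s \in AT -> iter n p (s x) = s (iter n p x).
Proof. by move=> sA; elim: n => //= n ->; rewrite (AutT_parent _ sA). Qed.

Lemma AutT_eq_root s x : s \in AT -> (s x == r) = (x == r).
Proof. by move=> sA; rewrite -{1}(AutT_root sA) (inj_eq perm_inj). Qed.

Lemma AutT_level s d z : s \in AT -> (s z \in level r p d) = (z \in level r p d).
Proof. by move=> sA; rewrite !inE !AutT_iter // !AutT_eq_root. Qed.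

Lemma AutT_ancestor s a z : s \in AT -> ancestor p (s a) (s z) = ancestor p a z.
Proof.
move=> sA; apply/ancestorP/ancestorP => -[n za]; exists n.
  by apply: (@perm_inj _ s); rewrite -AutT_iter.
by rewrite AutT_iter // za.
Qed.

Lemma AutT_norm_level s d : s \in AT -> s \in 'N(level r p d | 'P).
Proof. by move=> sA; apply/astabsP => z; rewrite /= /aperm AutT_level. Qed.

Lemma orbitTP x y : reflect (exists2 s, s \in AT & s x = y) (y \in OT x).
Proof.
by apply: (iffP imsetP) => [[s sA ->] | [s sA <-]]; exists s.
Qed.

Lemma porbit_sub_orbitT s x : s \in AT -> porbit s x \subset OT x.
Proof.
move=> sA; apply/subsetP => y /porbitP[i ->].
by apply/orbitTP; exists (s ^+ i); rewrite ?groupX.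
Qed.

Section SubtreeSwap.
Variables (d : nat) (x y : T) (t : {perm T}).
Hypotheses (xL : x \in level r p d) (yL : y \in level r p d) (xny : x != y)
  (pxy : p x = p y) (tA : t \in AT) (txy : t x = y).

Definition swap_subtrees (z : T) : T :=
  if ancestor p x z then t z else if ancestor p y z then t^-1 z else z.

Let tVyx : t^-1 y = x. Proof. by rewrite -txy permK. Qed.

Let ancestor_xy_disjoint z : ancestor p x z -> ancestor p y z -> False.
Proof. by move=> xz yz; move: xny; rewrite (level_ancestor_uniq tree xL yL xz yz) eqxx. Qed.

Let swap_subtrees_invol : involutive swap_subtrees.
Proof.
move=> z; rewrite /swap_subtrees.
have [xz | xNz] := boolP (ancestor p x z).
  have ytz : ancestor p y (t z) by rewrite -txy AutT_ancestor.
  have [xtz | _] := boolP (ancestor p x (t z)); first by case: (ancestor_xy_disjoint xtz ytz).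
  by rewrite ytz permK.
have [yz | yNz] := boolP (ancestor p y z); last by rewrite (negPf xNz) (negPf yNz).
by rewrite -tVyx AutT_ancestor ?groupV // yz permKV.
Qed.

Lemma exists_subtree_swap : exists2 tau, tau \in AT &
  {in level r p d, tau =1 tperm x y} /\ (forall w, iter d p w = r -> tau w = w).
Proof.
pose tau := perm (can_inj swap_subtrees_invol).
have tau_upper w : iter d p w = r -> tau w = w.
  move=> wr; rewrite permE /swap_subtrees.
  by rewrite (negPf (level_ancestor_upper tree xL wr)) (negPf (level_ancestor_upper tree yL wr)).
have tau_level : {in level r p d, tau =1 tperm x y}.
  move=> w wL; rewrite permE /swap_subtrees !(level_ancestor tree _ wL) //.
  case: tpermP => [-> | -> | /eqP/negPf-> /eqP/negPf->]; rewrite ?eqxx ?tVyx //.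
  by rewrite eq_sym (negPf xny).
have pxr : iter d p (p x) = r by move: xL; rewrite inE -iterSr => /andP[/eqP].
exists tau => //; apply: mem_AutT_parent => [|z|z]; first exact/tau_upper/iter_parent_root.
- have [-> | zx] := eqVneq z x.
    by rewrite tau_upper // permE /swap_subtrees ancestor_refl txy pxy.
  have [-> | zy] := eqVneq z y.
    by rewrite -pxy tau_upper // tau_level // tpermR.
  rewrite !permE /swap_subtrees.
  have [xz | xNz] := boolP (ancestor p x z).
    by rewrite ancestor_parent_neq // AutT_parent.
  have xNpz : ancestor p x (p z) = false by apply: contraNF xNz; apply: ancestor_parent.
  have [yz | yNz] := boolP (ancestor p y z).
    by rewrite xNpz ancestor_parent_neq // AutT_parent ?groupV.
  by rewrite xNpz; case: ifP => // /ancestor_parent; rewrite (negPf yNz).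
- by rewrite permE /swap_subtrees; do 2?case: ifP => _; rewrite ?AutT_col ?groupV.
Qed.

End SubtreeSwap.

Definition orbits_in_cycles_upto d s :=
  forall x, iter d p x = r -> OT x \subset porbit s x.

Definition level_cycles d s := #|porbits (restr_perm (level r p d) s)|.

Lemma orbits_in_cycles_upto0 : orbits_in_cycles_upto 0 1.
Proof.
move=> _ /= ->; apply/subsetP => y /orbitTP[s sA <-].
by rewrite AutT_root // porbit_id.
Qed.

Lemma orbits_in_cycles_upto_mull d (tau : {perm T}) s :
  s \in AT -> (forall w, iter d p w = r -> tau w = w) ->
  orbits_in_cycles_upto d s -> orbits_in_cycles_upto d (tau * s).
Proof.
move=> sA tau_up sC w wr.
have tsX i : ((tau * s) ^+ i) w = (s ^+ i) w.
  elim: i => // i IH; rewrite !expgSr !permM IH tau_up //.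
  by rewrite AutT_iter ?groupX // wr AutT_root ?groupX.
apply: subset_trans (sC w wr) _; apply/subsetP => z /porbitP[i ->].
by rewrite -tsX mem_porbit.
Qed.

Lemma restr_perm_level_mull d (tau : {perm T}) s x y : s \in AT -> tau \in AT ->
  x \in level r p d -> y \in level r p d -> {in level r p d, tau =1 tperm x y} ->
  restr_perm (level r p d) (tau * s) = tperm x y * restr_perm (level r p d) s.
Proof.
move=> sA tauA xL yL tauL; apply/permP => z; rewrite permM.
have [zL | zNL] := boolP (z \in level r p d).
  have tzL : tperm x y z \in level r p d by case: tpermP => _; rewrite ?xL ?yL ?zL.
  by rewrite !restr_permE ?AutT_norm_level ?groupM // permM tauL.
have [xz yz] : x != z /\ y != z by split; apply: contraNneq zNL => <-.
by rewrite tpermD // !(out_perm (restr_perm_on _ _)).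
Qed.

Lemma orbitT_sibling s x y : s \in AT -> OT (p x) \subset porbit s (p x) ->
  y \in OT x -> y \notin porbit s x ->
  exists y', [/\ y' \in OT x, p y' = p x & y' \notin porbit s x].
Proof.
move=> sA pxC /orbitTP[t tA txy] yNC.
have : p y \in OT (p x) by apply/orbitTP; exists t; rewrite // AutT_parent // txy.
move/(subsetP pxC)/porbitP => [j pyj].
have sjA : (s ^+ j)^-1 \in AT by rewrite groupV groupX.
exists ((s ^+ j)^-1 y); split.
- by apply/orbitTP; exists (t * (s ^+ j)^-1); rewrite ?groupM // permM txy.
- by rewrite -(AutT_parent _ sjA) pyj permK.
- by rewrite porbit_sym -(porbit_perm s j) permKV -porbit_sym.
Qed.

Lemma fewer_level_cycles d s x y : s \in AT -> orbits_in_cycles_upto d s ->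
  x \in level r p d -> y \in OT x -> y \notin porbit s x ->
  exists2 s', s' \in AT & orbits_in_cycles_upto d s' /\ level_cycles d s' < level_cycles d s.
Proof.
move=> sA sC xL yO yNC.
have pxr : iter d p (p x) = r by move: xL; rewrite inE -iterSr => /andP[/eqP].
have [y' [/orbitTP[t tA txy'] pxy' y'NC]] := orbitT_sibling sA (sC _ pxr) yO yNC.
have y'L : y' \in level r p d by rewrite -txy' AutT_level.
have xny' : x != y' by apply: contraNneq y'NC => <-; apply: porbit_id.
have [tau tauA [tau_level tau_upper]] := exists_subtree_swap xL y'L xny' (esym pxy') tA txy'.
exists (tau * s); first by rewrite groupM.
split; first exact: orbits_in_cycles_upto_mull.
have := porbits_mul_tperm (restr_perm (level r p d) s) x y'.
rewrite /= -(restr_perm_level_mull sA tauA) //.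
rewrite porbit_restr_perm ?AutT_norm_level // -porbit_sym y'NC xny' /level_cycles.
by move=> merge; rewrite -(ltn_add2r 2) [X in X < _]merge ltn_add2l.
Qed.

Lemma orbits_in_cycles_upto_step d s : s \in AT -> orbits_in_cycles_upto d s ->
  exists2 s', s' \in AT & orbits_in_cycles_upto d.+1 s'.
Proof.
have [n] := ubnP (level_cycles d s); elim: n s => // n IH s sn sA sC.
have [allC | ] := boolP [forall x, (iter d.+1 p x == r) ==> (OT x \subset porbit s x)].
  by exists s => // x xr; apply: (implyP (forallP allC x)); apply/eqP.
move=> /forallPn[x]; rewrite negb_imply => /andP[/eqP xr /subsetPn[y yO yNC]].
have [xr' | xnr] := eqVneq (iter d p x) r; first by case/subsetPn: (sC x xr'); exists y.
have xL : x \in level r p d by rewrite inE xr eqxx xnr.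
have [s' s'A [s'C lt_s's]] := fewer_level_cycles sA sC xL yO yNC.
by apply: (IH s') => //; apply: leq_trans lt_s's _.
Qed.

Lemma exists_AutT_cycles_orbits : exists2 s, s \in AT & forall x, porbit s x = OT x.
Proof.
have upto d : exists2 s, s \in AT & orbits_in_cycles_upto d s.
  elim: d => [|d [s sA sC]]; last exact: orbits_in_cycles_upto_step sC.
  by exists 1; [apply: group1 | apply: orbits_in_cycles_upto0].
have depth x : exists n, iter n p x == r.
  by case: tree => _ /(_ x) [n xn]; exists n; apply/eqP.
have [s sA sC] := upto (\max_x xchoose (depth x)).
exists s => // x; apply/eqP; rewrite eqEsubset porbit_sub_orbitT //=.
apply: sC; rewrite -(subnK (leq_bigmax (F := fun x => xchoose (depth x)) x)).
by rewrite iterD (eqP (xchooseP (depth x))) iter_parent_root.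
Qed.

Lemma AutT_fix_leaves a : a \in AT -> (forall l, tleaf r p l -> a l = l) -> a = 1.
Proof.
move=> aA a_leaves; apply/permP => v; rewrite perm1.
have [l lleaf /ancestorP[n <-]] := exists_leaf_below tree v.
by rewrite -AutT_iter // a_leaves.
Qed.

Lemma cycle_orbitsT_fix_leaf s a l : s \in AT -> (forall x, porbit s x = OT x) ->
  (forall x y, tleaf r p x -> tleaf r p y -> #|OT x| = #|OT y|) ->
  a \in <[s]> -> tleaf r p l -> a l = l -> a = 1.
Proof.
move=> sA sO leaf_card as_ lleaf al; apply: AutT_fix_leaves => [|l' l'leaf].
  by apply: subsetP as_; rewrite cycle_subG.
by apply: (cycle_fix_card_porbit as_) al; rewrite !sO (leaf_card l l').
Qed.

End TreeAutomorphisms.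

Lemma is_autGP (W : finType) (D : eqType) (e : rel W) (col : W -> D) (s : {perm W}) :
  reflect ((forall x y, e (s x) (s y) = e x y) /\ forall x, col (s x) = col x)
          (is_autG e col s).
Proof.
apply: (iffP andP) => [[/forallP se /forallP scol] | [se scol]].
  by split=> [x y | x]; apply/eqP; [apply: (forallP (se x)) | apply: scol].
by split; [apply/forallP => x; apply/forallP => y | apply/forallP => x]; rewrite ?se ?scol.
Qed.

Section FrameGraph.
Variables (T : finType) (C : eqType) (e : rel T) (col : T -> C).
Variable G : {group {perm T}}.
Hypothesis G_aut : {in G, forall a, is_autG e col a}.
Local Open Scope group_scope.

Definition frame_vertex := (T + ({a | a \in G} + {a | a \in G} * T))%type.

(* [inl v] is the vertex v of the original graph, [inr (inl g)] a new vertex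
   for g in G, and [inr (inr (g, v))] a new vertex joined to g and to v and
   coloured by [g^-1 v]. *)
Definition frame_adj : rel frame_vertex := fun a b =>
  match a, b with
  | inl x, inl y => e x y
  | inr (inl g), inr (inr (h, _)) | inr (inr (h, _)), inr (inl g) => g == h
  | inl x, inr (inr (_, v)) | inr (inr (_, v)), inl x => x == v
  | _, _ => false
  end.

Definition frame_col (w : frame_vertex) : C + (unit + T) :=
  match w with
  | inl x => inl (col x)
  | inr (inl _) => inr (inl tt)
  | inr (inr (g, v)) => inr (inr ((val g)^-1 v))
  end.

Lemma frame_adj_sym : symmetric e -> symmetric frame_adj.
Proof. by move=> e_sym [x|[g|[g v]]] [y|[h|[h w]]] //=. Qed.

Lemma frame_adj_irr : irreflexive e -> irreflexive frame_adj.
Proof. by move=> e_irr [x|[g|[g v]]] //=. Qed.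

(* phi is the right translation by a on the new vertices. *)
Lemma frame_translation a : a \in G ->
  exists2 phi : {perm frame_vertex}, is_autG frame_adj frame_col phi &
    forall v, phi (inl v) = inl (a v).
Proof.
move=> aG; have /is_autGP[ae acol] := G_aut aG.
pose ra (g : {a | a \in G}) : {a | a \in G} := exist _ (val g * a) (groupM (valP g) aG).
have ra_inj : injective ra by move=> g h /(congr1 val)/mulIg/val_inj.
pose F (w : frame_vertex) : frame_vertex :=
  match w with
  | inl v => inl (a v)
  | inr (inl g) => inr (inl (ra g))
  | inr (inr (g, v)) => inr (inr (ra g, a v))
  end.
have F_inj : injective F.
  move=> [x|[g|[g v]]] [y|[h|[h w]]] //= [].
  - by move/perm_inj ->.
  - by move/mulIg/val_inj ->.
  - by move/mulIg/val_inj -> => /perm_inj ->.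
exists (perm F_inj) => [|v]; last by rewrite permE.
apply/is_autGP; split=> [[x|[g|[g v]]] [y|[h|[h w]]] | [x|[g|[g v]]]];
  by rewrite !permE //= ?ae ?acol ?(inj_eq ra_inj) ?(inj_eq perm_inj) // invMg permM permK.
Qed.

Lemma frame_aut_restr phi : is_autG frame_adj frame_col phi ->
  exists2 a, a \in G & (forall v, phi (inl v) = inl (a v)) /\ (a = 1 -> phi = 1).
Proof.
case/is_autGP => phi_adj phi_col.
have tree_vertex v : {w | phi (inl v) = inl w}.
  by move: (phi_col (inl v)); case: (phi (inl v)) => [w|[g|[g w]]] // _; exists w.
have group_vertex g : {h | phi (inr (inl g)) = inr (inl h)}.
  by move: (phi_col (inr (inl g))); case: (phi (inr (inl g))) => [w|[h|[h w]]] // _; exists h.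
pose psi v := sval (tree_vertex v); pose pi g := sval (group_vertex g).
have psiE v : phi (inl v) = inl (psi v) := svalP (tree_vertex v).
have piE g : phi (inr (inl g)) = inr (inl (pi g)) := svalP (group_vertex g).
have pairE g v : phi (inr (inr (g, v))) = inr (inr (pi g, psi v)) /\
    (val (pi g))^-1 (psi v) = (val g)^-1 v.
  have := phi_adj (inr (inl g)) (inr (inr (g, v))).
  have := phi_adj (inl v) (inr (inr (g, v))).
  have := phi_col (inr (inr (g, v))).
  rewrite piE psiE /= !eqxx; case: (phi (inr (inr (g, v)))) => [w|[h|[h w]]] //=.
  by move=> [hw] /eqP wv /eqP hg; subst w h.
pose a := val (pi (exist _ 1 (group1 G))).
have psiA v : psi v = a v.
  have [_] := pairE (exist _ 1 (group1 G)) v; rewrite /= invg1 perm1 => a_psi.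
  by rewrite -{2}a_psi permKV.
exists a; first exact: valP; split=> [v | a1]; first by rewrite psiE psiA.
have psi1 v : psi v = v by rewrite psiA a1 perm1.
have pi1 g : pi g = g.
  apply/val_inj/invg_inj/permP => v.
  by have [_] := pairE g v; rewrite psi1.
apply/permP => -[v|[g|[g v]]]; rewrite perm1; first by rewrite psiE psi1.
  by rewrite piE pi1.
by have [-> _] := pairE g v; rewrite pi1 psi1.
Qed.

End FrameGraph.

Theorem theorem2 (T : finType) (C : eqType) (r : T) (p : T -> T) (col : T -> C) :
  is_rooted_tree r p ->
  (forall x y : T, tleaf r p x -> tleaf r p y ->
     #|orbitT r p col x| = #|orbitT r p col y|) ->
  exists (W : finType) (D : eqType) (e : rel W) (colH : W -> D)
         (f : T -> W) (iota : C -> D),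
    [/\ symmetric e, irreflexive e, injective f & injective iota] /\
        (* T with its colouring is an induced subgraph of H via f *)
        (forall x y : T, e (f x) (f y) = tadj p x y) /\
        (forall x : T, colH (f x) = iota (col x)) /\
    [/\ (* V(T) is Aut(H)-invariant *)
        (forall s : {perm W}, is_autG e colH s -> forall x : T, s (f x) \in codom f),
        (* faithful on V(T) *)
        (forall s : {perm W}, is_autG e colH s ->
           (forall x : T, s (f x) = f x) -> s = 1%g),
        (* semiregular on the leaves of T *)
        (forall s : {perm W}, is_autG e colH s ->
           forall x : T, tleaf r p x -> s (f x) = f x -> s = 1%g) &
        (* orbits of Aut(H) on V(T) = orbits of Aut(T) *)
        (forall x y : T,
           (exists2 s : {perm W}, is_autG e colH s & s (f x) = f y) <->
           (exists2 t : {perm T}, is_autT r p col t & t x = y))].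
Proof.
move=> tree leaf_card.
have [s sA sO] := exists_AutT_cycles_orbits col tree.
have cycA : <[s]>%g \subset AutT r p col by rewrite cycle_subG.
have G_aut : {in <[s]>%g, forall a, is_autG (tadj p) col a}.
  by move=> a /(subsetP cycA); apply: AutT_is_autG.
pose restr := @frame_aut_restr _ _ (tadj p) col <[s]>%G.
exists (frame_vertex <[s]>%G), (C + (unit + T))%type, (frame_adj (tadj p) (G := <[s]>%G)),
  (frame_col col (G := <[s]>%G)), inl, inl.
split; first by split; [exact/frame_adj_sym/tadj_sym | exact/frame_adj_irr/tadj_irr
                       | move=> ? ? [] | move=> ? ? []].
do 2!split => //; split.
- by move=> phi /restr[a _ [aE _]] x; rewrite aE codom_f.
- move=> phi /restr[a _ [aE a1]] phi_fix; apply: a1; apply/permP => v.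
  by have := phi_fix v; rewrite aE perm1 => -[].
- move=> phi /restr[a aG [aE a1]] x xleaf; rewrite aE => -[ax]; apply: a1.
  exact: (cycle_orbitsT_fix_leaf tree sA sO leaf_card aG xleaf ax).
- move=> x y; split=> [[phi /restr[a aG [aE _]]] | [t tA txy]].
    rewrite aE => -[axy]; exists a => //.
    by have := subsetP cycA a aG; rewrite inE.
  have : y \in orbitT r p col x by apply/orbitTP; exists t; rewrite ?inE.
  rewrite -sO => /porbitP[i ->].
  have [phi phiA phiE] := frame_translation G_aut (mem_cycle s i).
  by exists phi; rewrite ?phiE.
Qed.
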